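(* Let $\hat A=\sum_{i=1}^p b_i\prod_{j=1}^{l_i}(\hat a^\dagger)^{n_{i,j}}(\hat a)^{m_{i,j}}$ be a single-mode operator, with $b_i\in\mathbb C$ and nonnegative integers $n_{i,j},m_{i,j}$, such that every term contains at most $n$ creation operators in total, i.e. $\sum_{j=1}^{l_i}n_{i,j}\le n$ for all $i$. Then $\hat A$ has approximate operator coherent rank at most $n+1$.
   Context: Single mode with Fock basis $\{|n\rangle\}$, annihilation operator $\hat a=\sum_{n\ge1}\sqrt n|n-1\rangle\langle n|$, creation operator $\hat a^\dagger$. Coherent state $|\alpha\rangle=e^{-|\alpha|^2/2}\sum_n\frac{\alpha^n}{\sqrt{n!}}|n\rangle$. A (possibly unnormalized) state has coherent rank $k$ if it is a superposition of $k$ coherent states; its approximate coherent rank is the smallest $k$ such that for every $\delta>0$ there is a coherent rank $k$ state with fidelity (after normalization) greater than $1-\delta$ to it. An operator $\hat A$ has approximate operator coherent rank $\ell$ iff $\hat A|\alpha\rangle$ has approximate coherent rank at most $\ell$ for every coherent state $|\alpha\rangle$. *)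

From Stdlib Require Import Reals List Factorial.
From Coquelicot Require Import Coquelicot.
Open Scope R_scope.
Open Scope C_scope.

(* A single-mode (possibly unnormalized) vector, given by its Fock
   coefficients: psi k = <k|psi>. *)
Definition fvec := nat -> C.

(* annihilation operator a = sum_{n>=1} sqrt n |n-1><n| :
   (a psi)_k = sqrt(k+1) psi_(k+1) *)
Definition ann (psi : fvec) : fvec :=
  fun k => RtoC (sqrt (INR (S k))) * psi (S k).

Definition cre (psi : fvec) : fvec :=
  fun k => match k with
           | O => RtoC 0
           | S k' => RtoC (sqrt (INR k)) * psi k'
           end.

(* prod_{j=1}^{l} (a^dag)^{n_j} a^{m_j}, the factor j=1 being leftmost;
   the list stores the pairs (n_j, m_j) in order j = 1..l. *)
Definition monomial (l : list (nat * nat)) (psi : fvec) : fvec :=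
  fold_right (fun nm acc => Nat.iter (fst nm) cre (Nat.iter (snd nm) ann acc)) psi l.

(* A = sum_i b_i prod_j (a^dag)^{n_ij} a^{m_ij}; terms = list of (b_i, [(n_ij,m_ij)]_j) *)
Definition op_of (terms : list (C * list (nat * nat))) (psi : fvec) : fvec :=
  fun k => fold_right (fun t acc => Cplus (Cmult (fst t) (monomial (snd t) psi k)) acc)
                      (RtoC 0) terms.

Definition n_creations (l : list (nat * nat)) : nat := list_sum (map fst l).

Definition coherent (alpha : C) : fvec :=
  fun k => RtoC (exp (- (Cmod alpha ^ 2) / 2)%R) * pow_n alpha k
           / RtoC (sqrt (INR (Factorial.fact k))).

Definition superpos (cs : list (C * C)) : fvec :=
  fun k => fold_right (fun ca acc => Cplus (Cmult (fst ca) (coherent (snd ca) k)) acc)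
                      (RtoC 0) cs.

Definition has_coherent_rank (k : nat) (phi : fvec) : Prop :=
  exists cs : list (C * C), length cs = k /\ phi = superpos cs.

Definition inner (phi psi : fvec) : C :=
  (Series (fun k => Re (Cmult (Cconj (phi k)) (psi k))),
   Series (fun k => Im (Cmult (Cconj (phi k)) (psi k)))).

Definition normsq (phi : fvec) : R := Series (fun k => (Cmod (phi k) ^ 2)%R).

Definition fidelity (psi phi : fvec) : R :=
  (Cmod (inner phi psi) ^ 2 / (normsq phi * normsq psi))%R.

(* Convention: the zero vector (empty superposition, normalization undefined)
   counts as having approximate coherent rank 0. *)
Definition approx_coherent_rank_le (l : nat) (psi : fvec) : Prop :=
  psi = (fun _ => RtoC 0) \/
  exists k : nat, (k <= l)%nat /\
    forall delta : R, (0 < delta)%R ->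
      exists phi : fvec, has_coherent_rank k phi /\ (fidelity psi phi > 1 - delta)%R.

Definition approx_op_coherent_rank_le (l : nat) (A : fvec -> fvec) : Prop :=
  forall alpha : C, approx_coherent_rank_le l (A (coherent alpha)).

From Stdlib Require Import Reals List Factorial Lia Lra Psatz FunctionalExtensionality Classical.
From Coquelicot Require Import Coquelicot.

(* The photon-added coherent states (â†)^j|α⟩ satisfy
   â (â†)^j|α⟩ = α (â†)^j|α⟩ + j (â†)^(j-1)|α⟩, so Â|α⟩ lies in their span for j ≤ n.
   Up to the factor e^(-|α|²/2), (â†)^j|α⟩ is the j-th derivative at β = α of the
   unnormalized coherent state e^(|β|²/2)|β⟩ = Σ_k β^k/√k! |k⟩, so its j-th difference
   quotient with step h, a superposition of the coherent states at α, α + h, ..., α + jh,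
   approximates it with an error O(h) in norm.  Hence for one small step h, Â|α⟩ is
   approximated in norm by a superposition of the n + 1 coherent states at
   α, α + h, ..., α + nh, and a small relative error in norm forces the fidelity to 1. *)

Open Scope R_scope.
Open Scope C_scope.

Fixpoint csum (f : nat -> C) (n : nat) : C :=
  match n with O => 0 | S m => csum f m + f m end.

Fixpoint rsum (f : nat -> R) (n : nat) : R :=
  match n with O => 0%R | S m => (rsum f m + f m)%R end.

Lemma csum_S (f : nat -> C) n : csum f (S n) = csum f n + f n.
Proof. reflexivity. Qed.

Lemma csum_ext_lt (f g : nat -> C) n : (forall i, (i < n)%nat -> f i = g i) -> csum f n = csum g n.
Proof. induction n; intros H; simpl; auto. rewrite IHn, H; auto. Qed.

Lemma csum_ext (f g : nat -> C) n : (forall i, f i = g i) -> csum f n = csum g n.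
Proof. intros; apply csum_ext_lt; auto. Qed.

Lemma csum_shift (f : nat -> C) n : csum f (S n) = f O + csum (fun i => f (S i)) n.
Proof. induction n; simpl in *. ring. rewrite IHn. ring. Qed.

Lemma csum_add (f g : nat -> C) n : csum (fun i => f i + g i) n = csum f n + csum g n.
Proof. induction n; simpl. ring. rewrite IHn; ring. Qed.

Lemma csum_sub (f g : nat -> C) n : csum (fun i => f i - g i) n = csum f n - csum g n.
Proof. induction n; simpl. ring. rewrite IHn; ring. Qed.

Lemma csum_scal (c : C) (f : nat -> C) n : csum (fun i => c * f i) n = c * csum f n.
Proof. induction n; simpl. ring. rewrite IHn; ring. Qed.

Lemma csum_zero (f : nat -> C) n : (forall i, (i < n)%nat -> f i = 0) -> csum f n = 0.
Proof.
  induction n; intros H; simpl; auto.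
  rewrite IHn, H by auto with arith. ring.
Qed.

Lemma csum_extend (f : nat -> C) n N :
  (n <= N)%nat -> (forall i, (n <= i)%nat -> f i = 0) -> csum f N = csum f n.
Proof. intros H Hz. induction H; simpl; auto. rewrite IHle, Hz; auto. ring. Qed.

Lemma csum_switch (u : nat -> nat -> C) n m :
  csum (fun i => csum (fun j => u i j) m) n = csum (fun j => csum (fun i => u i j) n) m.
Proof.
  induction n; simpl.
  - symmetry; apply csum_zero; auto.
  - rewrite IHn, <- csum_add. reflexivity.
Qed.

Lemma csum_delta (x : C) j n :
  csum (fun m => if Nat.eqb m j then x else 0) n = if Nat.ltb j n then x else 0.
Proof.
  induction n; simpl; auto.
  rewrite IHn. destruct (Nat.eqb_spec n j) as [->|Hn].
  - rewrite Nat.ltb_irrefl, (proj2 (Nat.ltb_lt j (S j))) by lia. ring.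
  - destruct (Nat.ltb_spec j n), (Nat.ltb_spec j (S n)); try lia; ring.
Qed.

Lemma rsum_le (f g : nat -> R) n : (forall i, (i < n)%nat -> f i <= g i) -> rsum f n <= rsum g n.
Proof.
  induction n; intros H; simpl. lra.
  apply Rplus_le_compat; auto with arith.
Qed.

Lemma rsum_scal (c : R) (f : nat -> R) n : rsum (fun i => c * f i)%R n = (c * rsum f n)%R.
Proof. induction n; simpl. ring. rewrite IHn; ring. Qed.

Lemma RtoC_rsum (f : nat -> R) n : RtoC (rsum f n) = csum (fun i => RtoC (f i)) n.
Proof. induction n; simpl; auto. rewrite RtoC_plus, IHn; auto. Qed.

Lemma Cmod_csum (f : nat -> C) n : Cmod (csum f n) <= rsum (fun i => Cmod (f i)) n.
Proof.
  induction n; simpl. rewrite Cmod_0; lra.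
  eapply Rle_trans; [apply Cmod_triangle | lra].
Qed.

Fixpoint binom (n k : nat) : nat :=
  match n, k with
  | _, O => 1%nat
  | O, S _ => O
  | S n', S k' => (binom n' k' + binom n' (S k'))%nat
  end.

Lemma binom_n_0 n : binom n 0 = 1%nat.
Proof. destruct n; auto. Qed.

Lemma binom_gt n k : (n < k)%nat -> binom n k = 0%nat.
Proof.
  revert k; induction n; intros k H; destruct k; simpl; try lia; auto.
  rewrite !IHn by lia. auto.
Qed.

Lemma binom_diag n : binom n n = 1%nat.
Proof. induction n; simpl; auto. rewrite IHn, binom_gt by lia. lia. Qed.

Lemma binom_succ_diag n : binom (S n) n = S n.
Proof.
  induction n; auto.
  change (binom (S (S n)) (S n)) with (binom (S n) n + binom (S n) (S n))%nat.
  rewrite IHn, binom_diag. lia.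
Qed.

Definition Cnat (n : nat) : C := RtoC (INR n).

Lemma Cnat_add a b : Cnat (a + b) = Cnat a + Cnat b.
Proof. unfold Cnat. rewrite plus_INR, RtoC_plus. auto. Qed.

Lemma Cnat_S i : Cnat (S i) = 1 + Cnat i.
Proof. unfold Cnat. rewrite S_INR, RtoC_plus. ring. Qed.

Lemma csum_binom_S (g : nat -> C) k :
  csum (fun m => Cnat (binom (S k) m) * g m) (S (S k))
  = csum (fun m => Cnat (binom k m) * (g m + g (S m))) (S k).
Proof.
  assert (Hlow : csum (fun m => Cnat (binom k m) * g m) (S k)
                 = g O + csum (fun i => Cnat (binom k (S i)) * g (S i)) (S k)).
  { rewrite csum_shift, (csum_S _ k), binom_n_0, binom_gt by lia.
    unfold Cnat; simpl; ring. }
  rewrite csum_shift, binom_n_0.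
  rewrite (csum_ext _ (fun i => Cnat (binom k i) * g (S i) + Cnat (binom k (S i)) * g (S i)))
    by (intros i; cbn [binom]; rewrite Cnat_add; ring).
  rewrite (csum_ext (fun m => _ * (_ + _))
             (fun m => Cnat (binom k m) * g m + Cnat (binom k m) * g (S m))) by (intros; ring).
  rewrite !csum_add, Hlow. unfold Cnat; simpl; ring.
Qed.

Lemma Cpow_add_binom (x y : C) k :
  (x + y) ^ k = csum (fun m => Cnat (binom k m) * (x ^ (k - m) * y ^ m)) (S k).
Proof.
  induction k as [|k IH].
  - unfold Cnat; simpl; ring.
  - rewrite Cpow_S, IH, <- csum_scal, csum_binom_S. apply csum_ext_lt. intros m Hm.
    replace (S k - m)%nat with (S (k - m)) by lia. simpl (S k - S m)%nat.
    rewrite !Cpow_S. ring.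
Qed.

Lemma pow_add_binom (x y : R) k :
  ((x + y) ^ k)%R = rsum (fun m => INR (binom k m) * (x ^ (k - m) * y ^ m))%R (S k).
Proof.
  apply RtoC_inj. rewrite RtoC_rsum, RtoC_pow, RtoC_plus, Cpow_add_binom.
  apply csum_ext; intros m. unfold Cnat. rewrite !RtoC_mult, !RtoC_pow. reflexivity.
Qed.

(** * Finite differences *)

Definition fdiff (j : nat) (g : nat -> C) : C :=
  csum (fun i => (-1) ^ (j - i) * Cnat (binom j i) * g i) (S j).

Lemma fdiff_ext j g1 g2 : (forall i, g1 i = g2 i) -> fdiff j g1 = fdiff j g2.
Proof. intros H; unfold fdiff; apply csum_ext; intros; rewrite H; auto. Qed.

Lemma fdiff_S j g : fdiff (S j) g = fdiff j (fun i => g (S i)) - fdiff j g.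
Proof.
  unfold fdiff. rewrite <- csum_sub.
  rewrite (csum_ext _ (fun i => Cnat (binom (S j) i) * ((-1) ^ (S j - i) * g i)))
    by (intros; ring).
  rewrite csum_binom_S. apply csum_ext_lt. intros i Hi.
  replace (S j - i)%nat with (S (j - i)) by lia. simpl (S j - S i)%nat.
  rewrite Cpow_S. ring.
Qed.

Lemma fdiff_lin j (c : nat -> C) (g : nat -> nat -> C) n :
  fdiff j (fun i => csum (fun r => c r * g r i) n) = csum (fun r => c r * fdiff j (g r)) n.
Proof.
  unfold fdiff.
  rewrite (csum_ext _ (fun i =>
             csum (fun r => (-1) ^ (j - i) * Cnat (binom j i) * (c r * g r i)) n))
    by (intros; rewrite <- csum_scal; reflexivity).
  rewrite csum_switch. apply csum_ext. intros r.
  rewrite <- csum_scal. apply csum_ext. intros; ring.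
Qed.

Definition fdiff_pow (j m : nat) : C := fdiff j (fun i => Cnat i ^ m).

Lemma fdiff_pow_0_l m : fdiff_pow 0 m = 0 ^ m.
Proof. unfold fdiff_pow, fdiff, Cnat. simpl. ring. Qed.

Lemma fdiff_pow_S j m : fdiff_pow (S j) m = csum (fun r => Cnat (binom m r) * fdiff_pow j r) m.
Proof.
  unfold fdiff_pow. rewrite fdiff_S.
  rewrite (fdiff_ext j _ (fun i => csum (fun r => Cnat (binom m r) * Cnat i ^ r) (S m))).
  - rewrite fdiff_lin, csum_S, binom_diag. unfold Cnat at 3. simpl INR. ring.
  - intros i. rewrite Cnat_S, Cpow_add_binom. apply csum_ext; intros r.
    rewrite Cpow_1_l. ring.
Qed.

Lemma fdiff_pow_lt j m : (m < j)%nat -> fdiff_pow j m = 0.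
Proof.
  revert m; induction j; intros m Hm. lia.
  rewrite fdiff_pow_S. apply csum_zero. intros r Hr. rewrite IHj by lia. ring.
Qed.

Lemma fdiff_pow_diag j : fdiff_pow j j = Cnat (fact j).
Proof.
  induction j.
  - rewrite fdiff_pow_0_l. unfold Cnat; simpl. ring.
  - rewrite fdiff_pow_S, csum_S, csum_zero by (intros r Hr; rewrite fdiff_pow_lt by lia; ring).
    rewrite IHj, binom_succ_diag. unfold Cnat.
    change (fact (S j)) with (S j * fact j)%nat. rewrite mult_INR, RtoC_mult. ring.
Qed.

Lemma Cmod_fdiff_pow_le j m : Cmod (fdiff_pow j m) <= INR j ^ m.
Proof.
  revert m; induction j as [|j IH]; intros m.
  - rewrite fdiff_pow_0_l, Cmod_pow, Cmod_0. destruct m; simpl; lra.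
  - rewrite fdiff_pow_S, S_INR, Rplus_comm, pow_add_binom.
    eapply Rle_trans; [apply Cmod_csum|].
    apply Rle_trans with (rsum (fun r => INR (binom m r) * (1 ^ (m - r) * INR j ^ r))%R m).
    + apply rsum_le. intros r _. rewrite Cmod_mult, pow1, Rmult_1_l.
      unfold Cnat. rewrite Cmod_R, Rabs_pos_eq by apply pos_INR.
      apply Rmult_le_compat_l; [apply pos_INR | apply IH].
    + cbn [rsum]. rewrite pow1, Rmult_1_l.
      assert (0 <= INR (binom m m) * INR j ^ m)%R
        by (apply Rmult_le_pos; [apply pos_INR | apply pow_le, pos_INR]).
      lra.
Qed.

Lemma fdiff_affine_pow (a : C) (h : R) j k :
  fdiff j (fun i => (a + RtoC (INR i * h)) ^ k)
  = csum (fun m => Cnat (binom k m) * (a ^ (k - m) * RtoC h ^ m) * fdiff_pow j m) (S k).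
Proof.
  rewrite (fdiff_ext j _ (fun i => csum (fun m =>
             Cnat (binom k m) * (a ^ (k - m) * RtoC h ^ m) * Cnat i ^ m) (S k))).
  - apply fdiff_lin.
  - intros i. rewrite Cpow_add_binom. apply csum_ext; intros m.
    rewrite RtoC_mult, Cpow_mult_l. unfold Cnat. ring.
Qed.

Lemma pow_le_pow_of_le_1 (h : R) m p : (0 <= h <= 1)%R -> (p <= m)%nat -> (h ^ m <= h ^ p)%R.
Proof.
  intros Hh Hp. replace m with (p + (m - p))%nat by lia. rewrite pow_add.
  assert (h ^ (m - p) <= 1)%R by (rewrite <- (pow1 (m - p)); apply pow_incr; lra).
  assert (0 <= h ^ p)%R by (apply pow_le; lra).
  assert (0 <= h ^ (m - p))%R by (apply pow_le; lra).
  nra.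
Qed.

Lemma Cmod_fdiff_affine_term_le (a : C) (h : R) j k m : (0 < h <= 1)%R -> (j < m)%nat ->
  Cmod (Cnat (binom k m) * (a ^ (k - m) * RtoC h ^ m) * fdiff_pow j m)
  <= h ^ S j * (INR (binom k m) * (Cmod a ^ (k - m) * INR j ^ m)).
Proof.
  intros Hh Hjm. rewrite !Cmod_mult, !Cmod_pow. unfold Cnat.
  rewrite !Cmod_R, (Rabs_pos_eq (INR _)), (Rabs_pos_eq h) by (apply pos_INR || lra).
  pose proof (Cmod_fdiff_pow_le j m). pose proof (Cmod_ge_0 (fdiff_pow j m)).
  pose proof (pow_le_pow_of_le_1 h m (S j) ltac:(lra) Hjm).
  assert (0 <= h ^ m)%R by (apply pow_le; lra).
  assert (0 <= INR (binom k m) * Cmod a ^ (k - m))%R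
    by (apply Rmult_le_pos; [apply pos_INR | apply pow_le, Cmod_ge_0]).
  replace (INR (binom k m) * (Cmod a ^ (k - m) * h ^ m) * Cmod (fdiff_pow j m))%R
    with (INR (binom k m) * Cmod a ^ (k - m) * (h ^ m * Cmod (fdiff_pow j m)))%R by ring.
  replace (h ^ S j * (INR (binom k m) * (Cmod a ^ (k - m) * INR j ^ m)))%R
    with (INR (binom k m) * Cmod a ^ (k - m) * (h ^ S j * INR j ^ m))%R by ring.
  apply Rmult_le_compat_l; auto.
  apply Rmult_le_compat; auto.
Qed.

(* Divided by [h ^ j]: the j-th difference quotient of [b |-> b ^ k] at [a] differs from
   the j-th derivative [k!/(k-j)! a^(k-j)] by at most [h (|a| + j)^k]. *)
Lemma fdiff_affine_pow_err (a : C) (h : R) j k : (0 < h <= 1)%R ->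
  Cmod (fdiff j (fun i => (a + RtoC (INR i * h)) ^ k)
        - Cnat (binom k j) * (a ^ (k - j) * RtoC h ^ j) * Cnat (fact j))
  <= h ^ S j * (Cmod a + INR j) ^ k.
Proof.
  intros Hh. rewrite fdiff_affine_pow.
  set (term := fun m => Cnat (binom k m) * (a ^ (k - m) * RtoC h ^ m) * fdiff_pow j m).
  replace (Cnat (binom k j) * (a ^ (k - j) * RtoC h ^ j) * Cnat (fact j))
    with (csum (fun m => if Nat.eqb m j then term j else 0) (S k)).
  2:{ rewrite csum_delta. unfold term. rewrite fdiff_pow_diag.
      destruct (Nat.ltb_spec j (S k)); [reflexivity|].
      rewrite binom_gt by lia. unfold Cnat; simpl; ring. }
  rewrite <- csum_sub, pow_add_binom, <- rsum_scal.
  eapply Rle_trans; [apply Cmod_csum | apply rsum_le]. intros m _.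
  assert (0 <= h ^ S j * (INR (binom k m) * (Cmod a ^ (k - m) * INR j ^ m)))%R.
  { repeat apply Rmult_le_pos; try apply pow_le; try apply pos_INR; try apply Cmod_ge_0; lra. }
  destruct (Nat.lt_trichotomy m j) as [Hlt | [-> | Hgt]].
  - unfold term. rewrite fdiff_pow_lt, (proj2 (Nat.eqb_neq m j)) by lia.
    replace (_ * _ * 0 - 0) with (RtoC 0) by ring. rewrite Cmod_0. auto.
  - rewrite Nat.eqb_refl. replace (term j - term j) with (RtoC 0) by ring.
    rewrite Cmod_0. auto.
  - rewrite (proj2 (Nat.eqb_neq m j)) by lia. replace (term m - 0) with (term m) by ring.
    apply Cmod_fdiff_affine_term_le; auto.
Qed.

(** * Photon-added coherent states *)

Fixpoint ffact (k j : nat) : nat :=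
  match k, j with
  | _, O => 1%nat
  | O, S _ => O
  | S k', S j' => (S k' * ffact k' j')%nat
  end.

Lemma ffact_0_r k : ffact k 0 = 1%nat.
Proof. destruct k; auto. Qed.

Lemma ffact_pascal k j : ffact (S k) (S j) = (ffact k (S j) + S j * ffact k j)%nat.
Proof.
  revert j; induction k; intros j.
  - destruct j; simpl; lia.
  - destruct j.
    + simpl. rewrite ffact_0_r. lia.
    + change (ffact (S (S k)) (S (S j))) with (S (S k) * ffact (S k) (S j))%nat.
      change (ffact (S k) (S (S j))) with (S k * ffact k (S j))%nat.
      pose proof (IHk j) as H. change (ffact (S k) (S j)) with (S k * ffact k j)%nat in *.
      nia.
Qed.

Lemma ffact_binom k j : ffact k j = (binom k j * fact j)%nat.
Proof.
  revert j; induction k; intros j.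
  - destruct j; simpl; auto.
  - destruct j.
    + rewrite ffact_0_r, binom_n_0. simpl; auto.
    + rewrite ffact_pascal, !IHk. cbn [binom]. change (fact (S j)) with (S j * fact j)%nat.
      nia.
Qed.

Definition inv_sqrt_fact (k : nat) : R := / sqrt (INR (fact k)).

Lemma sqrt_fact_pos k : (0 < sqrt (INR (fact k)))%R.
Proof. apply sqrt_lt_R0, lt_0_INR, lt_O_fact. Qed.

Lemma inv_sqrt_fact_pos k : (0 < inv_sqrt_fact k)%R.
Proof. apply Rinv_0_lt_compat, sqrt_fact_pos. Qed.

Lemma inv_sqrt_fact_S k : inv_sqrt_fact (S k) = (inv_sqrt_fact k / sqrt (INR (S k)))%R.
Proof.
  unfold inv_sqrt_fact. change (fact (S k)) with (S k * fact k)%nat.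
  rewrite mult_INR, sqrt_mult by apply pos_INR.
  pose proof (sqrt_fact_pos k).
  assert (0 < sqrt (INR (S k)))%R by (apply sqrt_lt_R0, lt_0_INR; lia).
  field; lra.
Qed.

Lemma RtoC_neq_0 (r : R) : r <> 0%R -> RtoC r <> 0.
Proof. intros H1 H2. apply H1, RtoC_inj, H2. Qed.

Lemma pow_n_Cpow (x : C) k : pow_n x k = x ^ k.
Proof. induction k; simpl; try rewrite IHk; reflexivity. Qed.

Definition photon_added (a : C) (j : nat) : fvec :=
  fun k => RtoC (exp (- (Cmod a ^ 2) / 2) * INR (ffact k j) * inv_sqrt_fact k) * a ^ (k - j).

Lemma coherent_photon_added_0 a : coherent a = photon_added a 0.
Proof.
  apply functional_extensionality; intros k.
  unfold coherent, photon_added, inv_sqrt_fact, Cdiv.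
  rewrite ffact_0_r, pow_n_Cpow, Nat.sub_0_r, <- RtoC_inv by apply Rgt_not_eq, sqrt_fact_pos.
  rewrite !RtoC_mult. simpl INR. ring.
Qed.

Lemma ann_photon_added a j :
  ann (photon_added a j) = fun k => a * photon_added a j k + Cnat j * photon_added a (pred j) k.
Proof.
  apply functional_extensionality; intros k. unfold ann, photon_added, Cnat.
  assert (Hs : (0 < sqrt (INR (S k)))%R) by (apply sqrt_lt_R0, lt_0_INR; lia).
  rewrite inv_sqrt_fact_S. unfold Rdiv. set (s := sqrt (INR (S k))) in *.
  destruct j as [|j]; simpl pred.
  - rewrite !ffact_0_r, !Nat.sub_0_r, Cpow_S, !RtoC_mult, RtoC_inv by lra.
    simpl INR. field. apply RtoC_neq_0; lra.
  - rewrite ffact_pascal. simpl (S k - S j)%nat.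
    destruct (Nat.le_gt_cases (S j) k) as [Hle|Hlt].
    + replace (k - j)%nat with (S (k - S j)) by lia.
      rewrite Cpow_S, plus_INR, mult_INR, !RtoC_mult, RtoC_plus, !RtoC_mult, RtoC_inv by lra.
      field. apply RtoC_neq_0; lra.
    + rewrite (ffact_binom k (S j)), (binom_gt k (S j)), Nat.mul_0_l, Nat.add_0_l by lia.
      rewrite mult_INR, !RtoC_mult, RtoC_inv by lra.
      simpl (INR 0). field. apply RtoC_neq_0; lra.
Qed.

Lemma cre_photon_added a j : cre (photon_added a j) = photon_added a (S j).
Proof.
  apply functional_extensionality; intros k. unfold cre, photon_added. destruct k as [|k].
  - simpl. rewrite Rmult_0_r, Rmult_0_l. ring.
  - change (ffact (S k) (S j)) with (S k * ffact k j)%nat. simpl (S k - S j)%nat.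
    rewrite inv_sqrt_fact_S, mult_INR.
    assert (Hs : (0 < sqrt (INR (S k)))%R) by (apply sqrt_lt_R0, lt_0_INR; lia).
    replace (INR (S k)) with (sqrt (INR (S k)) * sqrt (INR (S k)))%R at 2
      by (apply sqrt_sqrt, pos_INR).
    unfold Rdiv. rewrite !RtoC_mult, RtoC_inv by lra.
    field. apply RtoC_neq_0; lra.
Qed.

Inductive photon_added_span (a : C) (N : nat) : fvec -> Prop :=
| pas_zero : photon_added_span a N (fun _ => 0)
| pas_gen j : (j < N)%nat -> photon_added_span a N (photon_added a j)
| pas_add f g : photon_added_span a N f -> photon_added_span a N g ->
    photon_added_span a N (fun k => f k + g k)
| pas_scal c f : photon_added_span a N f -> photon_added_span a N (fun k => c * f k).

Definition linear_op (L : fvec -> fvec) : Prop :=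
  (forall f g, L (fun k => f k + g k) = fun k => L f k + L g k) /\
  (forall c f, L (fun k => c * f k) = fun k => c * L f k).

Lemma ann_linear : linear_op ann.
Proof. split; intros; apply functional_extensionality; intros k; unfold ann; ring. Qed.

Lemma cre_linear : linear_op cre.
Proof. split; intros; apply functional_extensionality; intros [|k]; unfold cre; ring. Qed.

Lemma photon_added_span_mono a N M f :
  (N <= M)%nat -> photon_added_span a N f -> photon_added_span a M f.
Proof. intros H Hs; induction Hs; constructor; auto; lia. Qed.

Lemma photon_added_span_map (L : fvec -> fvec) a N M :
  linear_op L ->
  (forall j, (j < N)%nat -> photon_added_span a M (L (photon_added a j))) ->
  forall f, photon_added_span a N f -> photon_added_span a M (L f).
Proof.
  intros [Hadd Hscal] Hgen f Hs. induction Hs.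
  - set (zero := fun _ : nat => 0 : C).
    replace zero with (fun k => 0 * zero k) at 1
      by (apply functional_extensionality; intros; unfold zero; ring).
    rewrite Hscal. replace (fun k => 0 * L zero k) with zero
      by (apply functional_extensionality; intros; unfold zero; ring).
    constructor.
  - auto.
  - rewrite Hadd. constructor; auto.
  - rewrite Hscal. constructor; auto.
Qed.

Lemma photon_added_span_ann a N f :
  photon_added_span a N f -> photon_added_span a N (ann f).
Proof.
  apply photon_added_span_map; [apply ann_linear|]. intros j Hj.
  rewrite ann_photon_added. apply pas_add; apply pas_scal; constructor; lia.
Qed.

Lemma photon_added_span_cre a N f :
  photon_added_span a N f -> photon_added_span a (S N) (cre f).
Proof.
  apply photon_added_span_map; [apply cre_linear|]. intros j Hj.
  rewrite cre_photon_added. constructor; lia.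
Qed.

Lemma photon_added_span_monomial a N f l :
  photon_added_span a N f -> photon_added_span a (n_creations l + N) (monomial l f).
Proof.
  intros H; induction l as [|[p q] l IH]; simpl; auto.
  unfold n_creations in *. simpl. rewrite <- Nat.add_assoc.
  induction p as [|p IHp]; simpl.
  - induction q; simpl; auto. apply photon_added_span_ann; auto.
  - apply photon_added_span_cre, IHp.
Qed.

Lemma photon_added_span_op a terms n :
  (forall t, In t terms -> (n_creations (snd t) <= n)%nat) ->
  photon_added_span a (S n) (op_of terms (coherent a)).
Proof.
  induction terms as [|t ts IH]; intros H.
  - apply pas_zero.
  - apply pas_add; [apply pas_scal | apply IH; intros; apply H; right; auto].
    apply (photon_added_span_mono a (n_creations (snd t) + 1)).
    + specialize (H t (or_introl eq_refl)). lia.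
    + apply photon_added_span_monomial. rewrite coherent_photon_added_0. constructor; lia.
Qed.

Open Scope R_scope.

Lemma Series_ge_term (u : nat -> R) k0 :
  ex_series u -> (forall k, 0 <= u k) -> u k0 <= Series u.
Proof.
  intros Hu Hpos. apply Rle_trans with (sum_f_R0 u k0).
  - destruct k0; simpl; [lra|]. pose proof (cond_pos_sum u k0 Hpos). lra.
  - apply sum_incr; auto. apply (proj1 (is_series_Reals u (Series u))), Series_correct, Hu.
Qed.

Lemma ex_series_sq_le (u : nat -> R) (v : nat -> R) (M : R) :
  (forall k, Rabs (u k) <= M * v k) -> ex_series (fun k => v k ^ 2) ->
  ex_series (fun k => u k ^ 2).
Proof.
  intros Huv Hv. apply (ex_series_le (fun k => u k ^ 2) (fun k => M ^ 2 * v k ^ 2)).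
  - intros k. change (norm (u k ^ 2)) with (Rabs (u k ^ 2)).
    rewrite Rabs_pos_eq by apply pow2_ge_0. rewrite <- Rpow_mult_distr, <- (pow2_abs (u k)).
    apply pow_incr. split; [apply Rabs_pos | apply Huv].
  - apply (ex_series_scal_l (M ^ 2)) in Hv. exact Hv.
Qed.

Lemma Cmod_add_sqr (p d : C) :
  Cmod (p + d)%C ^ 2 = Cmod p ^ 2 + 2 * Re (Cconj p * d)%C + Cmod d ^ 2.
Proof. rewrite !Cmod2_alt. destruct p as [p1 p2], d as [d1 d2]. simpl. ring. Qed.

Lemma Re_conj_add_mul (p d : C) : Re (Cconj (p + d) * p)%C = Cmod p ^ 2 + Re (Cconj p * d)%C.
Proof. rewrite Cmod2_alt. destruct p as [p1 p2], d as [d1 d2]. simpl. ring. Qed.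

Lemma Rabs_Re_conj_mul_le (p d : C) (t : R) : 0 < t ->
  Rabs (Re (Cconj p * d)%C) <= (t ^ 2 * Cmod p ^ 2 + Cmod d ^ 2) / (2 * t).
Proof.
  intros Ht. apply Rle_div_r; [lra|]. rewrite !Cmod2_alt.
  destruct p as [p1 p2], d as [d1 d2]. cbn [Re Im Cconj Cmult fst snd].
  assert (0 <= (t * p1 + d1) ^ 2 + (t * p2 + d2) ^ 2)
    by (apply Rplus_le_le_0_compat; apply pow2_ge_0).
  assert (0 <= (t * p1 - d1) ^ 2 + (t * p2 - d2) ^ 2)
    by (apply Rplus_le_le_0_compat; apply pow2_ge_0).
  unfold Rabs. destruct (Rcase_abs _); nra.
Qed.

Lemma Series_Re_conj_mul_le (p d : fvec) (t : R) : 0 < t ->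
  ex_series (fun k => Cmod (p k) ^ 2) -> ex_series (fun k => Cmod (d k) ^ 2) ->
  ex_series (fun k => Re (Cconj (p k) * d k)%C) /\
  2 * t * Rabs (Series (fun k => Re (Cconj (p k) * d k)%C))
  <= t ^ 2 * Series (fun k => Cmod (p k) ^ 2) + Series (fun k => Cmod (d k) ^ 2).
Proof.
  intros Ht Hp Hd.
  set (b := fun k => (t ^ 2 * Cmod (p k) ^ 2 + Cmod (d k) ^ 2) * / (2 * t)).
  assert (Hb : ex_series b).
  { apply ex_series_scal_r, (ex_series_plus (fun k => t ^ 2 * Cmod (p k) ^ 2)); auto.
    apply (ex_series_scal_l (t ^ 2)) in Hp. exact Hp. }
  assert (Hle : forall k, Rabs (Re (Cconj (p k) * d k)%C) <= b k)
    by (intros; apply Rabs_Re_conj_mul_le; auto).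
  assert (Habs : ex_series (fun k => Rabs (Re (Cconj (p k) * d k)%C))).
  { apply (ex_series_le (fun k => Rabs (Re (Cconj (p k) * d k)%C)) b); auto.
    intros k. change (norm ?x) with (Rabs x). rewrite Rabs_Rabsolu. apply Hle. }
  split; [apply ex_series_Rabs, Habs|].
  rewrite Rmult_comm. apply Rle_div_r; [lra|].
  eapply Rle_trans; [apply Series_Rabs, Habs|].
  apply Rle_trans with (Series b); [apply Series_le; auto; intros; split; [apply Rabs_pos | auto]|].
  unfold b. rewrite Series_scal_r, Series_plus, Series_scal_l; auto.
  - right. reflexivity.
  - apply (ex_series_scal_l (t ^ 2)) in Hp. exact Hp.
Qed.

Lemma ratio_ge_of_small_perturbation (Np Nd X Xi t : R) :
  0 < t <= 1 / 4 -> 0 < Np -> 0 <= Nd <= t ^ 2 * Np -> 2 * t * Rabs X <= t ^ 2 * Np + Nd ->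
  1 - 4 * t <= ((Np + X) ^ 2 + Xi ^ 2) / ((Np + 2 * X + Nd) * Np).
Proof.
  intros Ht HNp HNd HX.
  assert (HXb : - (t * Np) <= X <= t * Np) by (unfold Rabs in HX; destruct (Rcase_abs X); nra).
  apply Rle_div_r; [apply Rmult_lt_0_compat; nra|].
  assert (Hup : (Np + 2 * X + Nd) * Np <= (1 + t) ^ 2 * Np ^ 2) by nra.
  assert (Hlow : ((1 - t) * Np) ^ 2 <= (Np + X) ^ 2) by (apply pow_incr; nra).
  assert ((1 - 4 * t) * (1 + t) ^ 2 <= (1 - t) ^ 2) by nra.
  assert (0 <= Xi ^ 2) by apply pow2_ge_0.
  apply Rle_trans with ((1 - 4 * t) * ((1 + t) ^ 2 * Np ^ 2));
    [apply Rmult_le_compat_l; lra | nra].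
Qed.

Lemma fidelity_ge (psi phi : fvec) (t : R) : 0 < t <= 1 / 4 ->
  ex_series (fun k => Cmod (psi k) ^ 2) -> 0 < normsq psi ->
  ex_series (fun k => Cmod (phi k - psi k)%C ^ 2) ->
  Series (fun k => Cmod (phi k - psi k)%C ^ 2) <= t ^ 2 * normsq psi ->
  1 - 4 * t <= fidelity psi phi.
Proof.
  intros Ht Hpsi HNp Hd Hclose.
  set (d := fun k => (phi k - psi k)%C) in *.
  set (r := fun k => Re (Cconj (psi k) * d k)%C).
  destruct (Series_Re_conj_mul_le psi d t) as [Hr Hcross]; auto; try lra.
  assert (Hphi : forall k, phi k = (psi k + d k)%C) by (intros; unfold d; ring).
  assert (Hr2 : ex_series (fun k => 2 * r k)) by exact (ex_series_scal_l 2 r Hr).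
  assert (Hre : Series (fun k => Re (Cconj (phi k) * psi k)%C) = normsq psi + Series r).
  { unfold normsq. rewrite <- Series_plus; auto.
    apply Series_ext. intros k. rewrite Hphi. apply Re_conj_add_mul. }
  assert (Hnorm : normsq phi
                  = normsq psi + 2 * Series r + Series (fun k => Cmod (d k) ^ 2)).
  { unfold normsq. rewrite <- Series_scal_l, <- !Series_plus; auto.
    - apply Series_ext. intros k. rewrite Hphi. apply Cmod_add_sqr.
    - exact (ex_series_plus (fun k => Cmod (psi k) ^ 2) (fun k => 2 * r k) Hpsi Hr2). }
  assert (HNd : 0 <= Series (fun k => Cmod (d k) ^ 2)).
  { apply Rle_trans with (Cmod (d O) ^ 2); [apply pow2_ge_0|].
    apply (Series_ge_term (fun k => Cmod (d k) ^ 2)); auto. intros; apply pow2_ge_0. }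
  unfold fidelity, inner. rewrite Cmod2_alt. cbn [Re Im fst snd]. rewrite Hre, Hnorm.
  apply ratio_ge_of_small_perturbation; auto.
Qed.

Lemma normsq_pos (f : fvec) :
  ex_series (fun k => Cmod (f k) ^ 2) -> f <> (fun _ => 0%C) -> 0 < normsq f.
Proof.
  intros Hf Hnz.
  destruct (not_all_ex_not _ _ (fun H => Hnz (functional_extensionality _ _ H))) as [k0 Hk0].
  apply Rlt_le_trans with (Cmod (f k0) ^ 2).
  - apply pow_lt, Cmod_gt_0, Hk0.
  - apply (Series_ge_term (fun k => Cmod (f k) ^ 2)); auto. intros; apply pow2_ge_0.
Qed.

(** * Approximation by coherent states on a grid *)

(* [bargmann b] is the unnormalized coherent state [exp (|b|^2/2) |b>], whose
   coefficients are polynomial in [b]. *)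
Definition bargmann (b : C) (k : nat) : C := (RtoC (inv_sqrt_fact k) * b ^ k)%C.

Definition grid_comb (a : C) (h : R) (N : nat) (c : nat -> C) (k : nat) : C :=
  csum (fun i => c i * bargmann (a + RtoC (INR i * h)) k)%C N.

Definition grid_weight (a : C) (N k : nat) : R := (Cmod a + INR N) ^ k * inv_sqrt_fact k.

(* A grid shared by all small steps [h] is what makes this notion stable under sums;
   [grid_weight] is square-summable, so the approximation also holds in norm. *)
Definition grid_approx (a : C) (N : nat) (f : fvec) : Prop :=
  forall eps, 0 < eps -> exists h0, 0 < h0 /\ forall h, 0 < h < h0 ->
    exists c : nat -> C, forall k, Cmod (f k - grid_comb a h N c k)%C <= eps * grid_weight a N k.

Lemma grid_weight_nonneg a N k : 0 <= grid_weight a N k.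
Proof.
  unfold grid_weight. apply Rmult_le_pos; [| left; apply inv_sqrt_fact_pos].
  apply pow_le. pose proof (Cmod_ge_0 a); pose proof (pos_INR N); lra.
Qed.

Lemma grid_comb_add a h N (c1 c2 : nat -> C) k :
  grid_comb a h N (fun i => c1 i + c2 i)%C k = (grid_comb a h N c1 k + grid_comb a h N c2 k)%C.
Proof. unfold grid_comb. rewrite <- csum_add. apply csum_ext; intros; ring. Qed.

Lemma grid_comb_scal a h N (c0 : C) (c : nat -> C) k :
  grid_comb a h N (fun i => c0 * c i)%C k = (c0 * grid_comb a h N c k)%C.
Proof. unfold grid_comb. rewrite <- csum_scal. apply csum_ext; intros; ring. Qed.

Lemma grid_comb_fdiff a h N j (c0 : C) k : (j < N)%nat ->
  grid_comb a h N (fun i => c0 * ((-1) ^ (j - i) * Cnat (binom j i)))%C k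
  = (c0 * RtoC (inv_sqrt_fact k) * fdiff j (fun i => (a + RtoC (INR i * h)) ^ k))%C.
Proof.
  intros Hj. unfold grid_comb, fdiff, bargmann.
  rewrite (csum_extend _ (S j) N) by
    (try lia; intros i Hi; rewrite binom_gt by lia; unfold Cnat; simpl; ring).
  rewrite <- csum_scal. apply csum_ext. intros i. ring.
Qed.

Lemma grid_approx_zero a N : grid_approx a N (fun _ => 0%C).
Proof.
  intros eps Heps. exists 1. split; [lra|]. intros h Hh. exists (fun _ => 0%C). intros k.
  unfold grid_comb. rewrite csum_zero by (intros; ring).
  replace (RtoC 0 - RtoC 0)%C with (RtoC 0) by ring. rewrite Cmod_0.
  apply Rmult_le_pos; [lra | apply grid_weight_nonneg].
Qed.

Lemma grid_approx_add a N f g :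
  grid_approx a N f -> grid_approx a N g -> grid_approx a N (fun k => f k + g k)%C.
Proof.
  intros Hf Hg eps Heps.
  destruct (Hf (eps / 2) ltac:(lra)) as [h1 [Hh1 A1]].
  destruct (Hg (eps / 2) ltac:(lra)) as [h2 [Hh2 A2]].
  exists (Rmin h1 h2). split; [apply Rmin_glb_lt; lra|]. intros h Hh.
  pose proof (Rmin_l h1 h2). pose proof (Rmin_r h1 h2).
  destruct (A1 h ltac:(lra)) as [c1 Hc1]. destruct (A2 h ltac:(lra)) as [c2 Hc2].
  exists (fun i => c1 i + c2 i)%C. intros k. rewrite grid_comb_add.
  replace (f k + g k - (grid_comb a h N c1 k + grid_comb a h N c2 k))%C
    with ((f k - grid_comb a h N c1 k) + (g k - grid_comb a h N c2 k))%C by ring.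
  eapply Rle_trans; [apply Cmod_triangle|]. specialize (Hc1 k). specialize (Hc2 k). lra.
Qed.

Lemma grid_approx_scal a N c f : grid_approx a N f -> grid_approx a N (fun k => c * f k)%C.
Proof.
  intros Hf eps Heps. pose proof (Cmod_ge_0 c).
  destruct (Hf (eps / (Cmod c + 1))) as [h0 [Hh0 A]]; [apply Rdiv_lt_0_compat; lra|].
  exists h0. split; auto. intros h Hh. destruct (A h Hh) as [c1 Hc1].
  exists (fun i => c * c1 i)%C. intros k. rewrite grid_comb_scal.
  replace (c * f k - c * grid_comb a h N c1 k)%C with (c * (f k - grid_comb a h N c1 k))%C
    by ring.
  rewrite Cmod_mult.
  apply Rle_trans with ((Cmod c + 1) * (eps / (Cmod c + 1) * grid_weight a N k)).
  - apply Rmult_le_compat; [apply Cmod_ge_0 | apply Cmod_ge_0 | lra | apply Hc1].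
  - right. field. lra.
Qed.

Lemma photon_added_eq_scaled_derivative a (h : R) j k : h <> 0 ->
  photon_added a j k
  = (RtoC (exp (- (Cmod a ^ 2) / 2) * inv_sqrt_fact k / h ^ j)
     * (Cnat (binom k j) * (a ^ (k - j) * RtoC h ^ j) * Cnat (fact j)))%C.
Proof.
  intros Hh. unfold photon_added, Cnat.
  rewrite ffact_binom, mult_INR, <- RtoC_pow.
  unfold Rdiv. rewrite !RtoC_mult, RtoC_inv by (apply pow_nonzero; auto).
  field. apply RtoC_neq_0, pow_nonzero; auto.
Qed.

Lemma grid_approx_photon_added a N j : (j < N)%nat -> grid_approx a N (photon_added a j).
Proof.
  intros Hj eps Heps.
  set (E := exp (- (Cmod a ^ 2) / 2)). assert (HE : 0 < E) by apply exp_pos.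
  exists (Rmin 1 (eps / E)). split; [apply Rmin_glb_lt; [lra | apply Rdiv_lt_0_compat; lra]|].
  intros h [Hh0 Hh1]. pose proof (Rmin_l 1 (eps / E)). pose proof (Rmin_r 1 (eps / E)).
  assert (HEh : E * h <= eps) by (rewrite Rmult_comm; apply Rle_div_r; lra).
  exists (fun i => RtoC (E / h ^ j) * ((-1) ^ (j - i) * Cnat (binom j i)))%C. intros k.
  assert (Hhj : 0 < h ^ j) by (apply pow_lt; lra).
  pose proof (inv_sqrt_fact_pos k).
  rewrite grid_comb_fdiff, (photon_added_eq_scaled_derivative a h) by (auto || lra).
  fold E. set (X := E * inv_sqrt_fact k / h ^ j).
  assert (HX : 0 <= X) by (unfold X; apply Rmult_le_pos; [nra | left; apply Rinv_0_lt_compat; lra]).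
  set (F := fdiff j (fun i => ((a + RtoC (INR i * h)) ^ k)%C)).
  set (L := (Cnat (binom k j) * (a ^ (k - j) * RtoC h ^ j) * Cnat (fact j))%C).
  replace (RtoC X * L - RtoC (E / h ^ j) * RtoC (inv_sqrt_fact k) * F)%C
    with (- (RtoC X * (F - L)))%C
    by (unfold X; rewrite <- RtoC_mult; replace (E / h ^ j * inv_sqrt_fact k)
          with (E * inv_sqrt_fact k / h ^ j) by (field; lra); ring).
  rewrite Cmod_opp, Cmod_mult, Cmod_R, Rabs_pos_eq by exact HX.
  eapply Rle_trans; [apply Rmult_le_compat_l; [exact HX | apply fdiff_affine_pow_err; lra]|].
  unfold X, grid_weight.
  replace (E * inv_sqrt_fact k / h ^ j * (h ^ S j * (Cmod a + INR j) ^ k))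
    with (E * h * ((Cmod a + INR j) ^ k * inv_sqrt_fact k)) by (simpl; field; lra).
  pose proof (Cmod_ge_0 a). pose proof (pos_INR j).
  apply Rmult_le_compat; [nra | apply Rmult_le_pos; [apply pow_le|]; lra | exact HEh |].
  apply Rmult_le_compat_r; [lra|]. apply pow_incr.
  split; [lra | apply Rplus_le_compat_l, le_INR; lia].
Qed.

Lemma grid_approx_of_span a N f : photon_added_span a N f -> grid_approx a N f.
Proof.
  intros Hs; induction Hs.
  - apply grid_approx_zero.
  - apply grid_approx_photon_added; auto.
  - apply grid_approx_add; auto.
  - apply grid_approx_scal; auto.
Qed.

Lemma Cmod_grid_comb_le a h N c k : 0 < h < 1 ->
  Cmod (grid_comb a h N c k) <= rsum (fun i => Cmod (c i)) N * grid_weight a N k.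
Proof.
  intros Hh. unfold grid_comb. eapply Rle_trans; [apply Cmod_csum|].
  rewrite Rmult_comm, <- rsum_scal. apply rsum_le. intros i Hi.
  unfold bargmann, grid_weight.
  rewrite !Cmod_mult, Cmod_pow, Cmod_R, Rabs_pos_eq by (left; apply inv_sqrt_fact_pos).
  pose proof (inv_sqrt_fact_pos k). pose proof (Cmod_ge_0 (c i)).
  assert (Hnode : Cmod (a + RtoC (INR i * h)) <= Cmod a + INR N).
  { eapply Rle_trans; [apply Cmod_triangle|]. apply Rplus_le_compat_l.
    rewrite Cmod_R, Rabs_pos_eq by (apply Rmult_le_pos; [apply pos_INR | lra]).
    assert (INR i <= INR N) by (apply le_INR; lia). pose proof (pos_INR i). nra. }
  assert (Cmod (a + RtoC (INR i * h)) ^ k <= (Cmod a + INR N) ^ k)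
    by (apply pow_incr; split; [apply Cmod_ge_0 | exact Hnode]).
  replace ((Cmod a + INR N) ^ k * inv_sqrt_fact k * Cmod (c i))
    with (Cmod (c i) * (inv_sqrt_fact k * (Cmod a + INR N) ^ k)) by ring.
  apply Rmult_le_compat_l; auto. apply Rmult_le_compat_l; lra.
Qed.

Lemma grid_approx_bounded a N f : grid_approx a N f ->
  exists M, forall k, Cmod (f k) <= M * grid_weight a N k.
Proof.
  intros Hf. destruct (Hf 1 ltac:(lra)) as [h0 [Hh0 A]].
  set (h := Rmin (h0 / 2) (1 / 2)).
  assert (Hh : 0 < h < h0 /\ h < 1).
  { pose proof (Rmin_l (h0 / 2) (1 / 2)). pose proof (Rmin_r (h0 / 2) (1 / 2)).
    assert (0 < h) by (apply Rmin_glb_lt; lra). unfold h in *. lra. }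
  destruct (A h ltac:(lra)) as [c Hc].
  exists (1 + rsum (fun i => Cmod (c i)) N). intros k.
  replace (f k) with ((f k - grid_comb a h N c k) + grid_comb a h N c k)%C by ring.
  eapply Rle_trans; [apply Cmod_triangle|].
  pose proof (Hc k). pose proof (Cmod_grid_comb_le a h N c k ltac:(lra)). lra.
Qed.

Lemma grid_weight_sq_summable a N : ex_series (fun k => grid_weight a N k ^ 2).
Proof.
  exists (exp ((Cmod a + INR N) ^ 2)).
  eapply is_series_ext; [|apply (is_exp_Reals ((Cmod a + INR N) ^ 2))]. intros k.
  rewrite pow_n_pow. unfold grid_weight, inv_sqrt_fact.
  rewrite <- pow_mult, Nat.mul_comm, pow_mult, Rpow_mult_distr, pow_inv, pow2_sqrt
    by apply pos_INR.
  reflexivity.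
Qed.

Lemma grid_approx_sq_summable a N f : grid_approx a N f -> ex_series (fun k => Cmod (f k) ^ 2).
Proof.
  intros Hf. destruct (grid_approx_bounded a N f Hf) as [M HM].
  apply (ex_series_sq_le _ (grid_weight a N) M); [|apply grid_weight_sq_summable].
  intros k. rewrite Rabs_pos_eq by apply Cmod_ge_0. apply HM.
Qed.

Lemma superpos_map_seq (g : nat -> C * C) s N :
  superpos (map g (seq s N))
  = fun k => csum (fun i => fst (g (s + i)%nat) * coherent (snd (g (s + i)%nat)) k)%C N.
Proof.
  apply functional_extensionality; intros k. unfold superpos.
  revert s; induction N as [|N IH]; intros s; [reflexivity|].
  cbn [seq map fold_right]. rewrite IH, csum_shift, Nat.add_0_r. f_equal.
  apply csum_ext. intros i. rewrite Nat.add_succ_r. reflexivity.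
Qed.

Lemma bargmann_coherent b k : bargmann b k = (RtoC (exp (Cmod b ^ 2 / 2)) * coherent b k)%C.
Proof.
  rewrite coherent_photon_added_0. unfold bargmann, photon_added.
  rewrite ffact_0_r, Nat.sub_0_r, !RtoC_mult. simpl INR.
  assert (Hexp : (RtoC (exp (Cmod b ^ 2 / 2)) * RtoC (exp (- (Cmod b ^ 2) / 2)))%C = 1%R).
  { rewrite <- RtoC_mult, <- exp_plus. f_equal. replace (_ + _) with 0 by field. apply exp_0. }
  transitivity ((RtoC (exp (Cmod b ^ 2 / 2)) * RtoC (exp (- (Cmod b ^ 2) / 2)))
                * (RtoC (inv_sqrt_fact k) * b ^ k))%C; [rewrite Hexp|]; ring.
Qed.

Lemma grid_comb_coherent_rank a h N c : has_coherent_rank N (grid_comb a h N c).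
Proof.
  set (b := fun i => (a + RtoC (INR i * h))%C).
  exists (map (fun i => (c i * RtoC (exp (Cmod (b i) ^ 2 / 2)), b i)%C) (seq 0 N)).
  split; [rewrite length_map, length_seq; reflexivity|].
  rewrite superpos_map_seq. apply functional_extensionality; intros k.
  apply csum_ext. intros i. cbn [fst snd Nat.add]. rewrite bargmann_coherent. fold (b i). ring.
Qed.

Lemma grid_approx_l2 a N f : grid_approx a N f ->
  forall eps, 0 < eps -> exists phi : fvec, has_coherent_rank N phi /\
    ex_series (fun k => Cmod (phi k - f k)%C ^ 2) /\
    Series (fun k => Cmod (phi k - f k)%C ^ 2) <= eps.
Proof.
  intros Hf eps Heps.
  set (w := grid_weight a N). set (W := Series (fun k => w k ^ 2)).
  assert (HwW : ex_series (fun k => w k ^ 2)) by apply grid_weight_sq_summable.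
  assert (HW : 0 <= W).
  { apply Rle_trans with (w O ^ 2); [apply pow2_ge_0|].
    apply (Series_ge_term (fun k => w k ^ 2)); auto. intros; apply pow2_ge_0. }
  set (e := sqrt (eps / (W + 1))).
  assert (He : 0 < e) by (apply sqrt_lt_R0, Rdiv_lt_0_compat; lra).
  destruct (Hf e He) as [h0 [Hh0 A]]. destruct (A (h0 / 2) ltac:(lra)) as [c Hc].
  exists (grid_comb a (h0 / 2) N c). split; [apply grid_comb_coherent_rank|].
  set (phi := grid_comb a (h0 / 2) N c).
  assert (Hd : forall k, Rabs (Cmod (phi k - f k)%C) <= e * w k).
  { intros k. rewrite Rabs_pos_eq by apply Cmod_ge_0.
    rewrite <- Cmod_opp, Copp_minus_distr. apply Hc. }
  split; [apply (ex_series_sq_le _ w e Hd HwW)|].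
  apply Rle_trans with (Series (fun k => e ^ 2 * w k ^ 2)).
  - apply Series_le; [|apply (ex_series_scal_l (e ^ 2)) in HwW; exact HwW].
    intros k. split; [apply pow2_ge_0|]. rewrite <- Rpow_mult_distr, <- (pow2_abs (Cmod _)).
    apply pow_incr. split; [apply Rabs_pos | apply Hd].
  - rewrite Series_scal_l. fold W. unfold e. rewrite pow2_sqrt by (apply Rdiv_le_0_compat; lra).
    apply Rle_trans with (eps / (W + 1) * (W + 1)); [|right; field; lra].
    apply Rmult_le_compat_l; [apply Rdiv_le_0_compat |]; lra.
Qed.

Lemma approx_coherent_rank_le_of_l2_approx N (f : fvec) :
  ex_series (fun k => Cmod (f k) ^ 2) ->
  (forall eps, 0 < eps -> exists phi : fvec, has_coherent_rank N phi /\
     ex_series (fun k => Cmod (phi k - f k)%C ^ 2) /\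
     Series (fun k => Cmod (phi k - f k)%C ^ 2) <= eps) ->
  approx_coherent_rank_le N f.
Proof.
  intros Hf Happrox.
  destruct (classic (f = fun _ => 0%C)) as [Hz | Hnz]; [left; exact Hz | right].
  exists N. split; [lia|]. intros delta Hdelta.
  pose proof (normsq_pos f Hf Hnz) as HS.
  set (t := Rmin delta 1 / 8).
  assert (Ht : 0 < t <= 1 / 4 /\ 4 * t < delta).
  { pose proof (Rmin_l delta 1). pose proof (Rmin_r delta 1).
    assert (0 < Rmin delta 1) by (apply Rmin_glb_lt; lra). unfold t. lra. }
  destruct (Happrox (t ^ 2 * normsq f)) as [phi [Hrank [Hex Hclose]]];
    [apply Rmult_lt_0_compat; [apply pow_lt|]; lra|].
  exists phi. split; auto.
  pose proof (fidelity_ge f phi t (proj1 Ht) Hf HS Hex Hclose). lra.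
Qed.

Theorem theorem3 (terms : list (C * list (nat * nat))) (n : nat) :
  (forall t, In t terms -> (n_creations (snd t) <= n)%nat) ->
  approx_op_coherent_rank_le (S n) (op_of terms).
Proof.
  intros Hterms alpha.
  assert (Happrox : grid_approx alpha (S n) (op_of terms (coherent alpha)))
    by (apply grid_approx_of_span, photon_added_span_op, Hterms).
  apply approx_coherent_rank_le_of_l2_approx.
  - apply (grid_approx_sq_summable alpha (S n)), Happrox.
  - apply (grid_approx_l2 alpha (S n)), Happrox.
Qed.
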